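(* Let $A$ be a coherent reduced commutative ring, $E$ a non-zero $A$-module and $R=A\propto E$ the trivial ring extension of $A$ by $E$. The following are equivalent: (1) $R$ is Hermite; (2) $R$ is B\'ezout; (3) $A$ is B\'ezout, $E$ is FP-injective and all finitely generated submodules of $E$ are cyclic.
   Context: All rings are commutative with identity. A ring is coherent if all its finitely generated ideals are finitely presented. The trivial ring extension $R=A\propto E$ is the ring with underlying group $A\times E$ and multiplication $(a,e)(a',e')=(aa',ae'+a'e)$. A ring is B\'ezout if every finitely generated ideal is principal; $R$ is Hermite if for all $a,b\in R$ there exist $d,a',b'$ with $a=da'$, $b=db'$, $Ra'+Rb'=R$. A module $E$ is FP-injective if $\mathrm{Ext}^1(F,E)=0$ for all finitely presented $F$. *)

From HB Require Import structures.
From mathcomp Require Import all_boot all_order all_algebra.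
Set Implicit Arguments. Unset Strict Implicit. Unset Printing Implicit Defensive.
Import GRing.Theory.
Local Open Scope ring_scope.

Definition reduced (A : comNzRingType) : Prop :=
  forall (x : A) (n : nat), x ^+ n = 0 -> x = 0.

Definition generates (A : comNzRingType) (M : lmodType A) (n : nat)
  (g : 'I_n -> M) : Prop :=
  forall v : M, exists c : 'I_n -> A, v = \sum_(i < n) c i *: g i.

(* The module of relations (syzygies) of a family g : 'I_n -> M,
   i.e. the kernel of A^n -> M, (c_i) |-> sum c_i g_i, is finitely
   generated (as a submodule of A^n, vectors of A^n being functions
   'I_n -> A). *)
Definition relations_fg (A : comNzRingType) (M : lmodType A) (n : nat)
  (g : 'I_n -> M) : Prop :=
  exists (m : nat) (r : 'I_m -> 'I_n -> A),
    (forall j, \sum_(i < n) r j i *: g i = 0) /\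
    (forall c : 'I_n -> A, \sum_(i < n) c i *: g i = 0 ->
       exists u : 'I_m -> A, forall i, c i = \sum_(j < m) u j * r j i).

Definition finitely_presented (A : comNzRingType) (M : lmodType A) : Prop :=
  exists (n : nat) (g : 'I_n -> M), generates g /\ relations_fg g.

Definition in_ideal (A : comNzRingType) (n : nat) (a : 'I_n -> A) (x : A) : Prop :=
  exists c : 'I_n -> A, x = \sum_(i < n) c i * a i.

Definition coherent (A : comNzRingType) : Prop :=
  forall (n : nat) (a : 'I_n -> A),
    exists (m : nat) (b : 'I_m -> A),
      (forall x, in_ideal a x <-> in_ideal b x) /\
      relations_fg (b : 'I_m -> A^o).

Definition bezout (R : comNzRingType) : Prop :=
  forall (n : nat) (a : 'I_n -> R), exists d : R,
    (forall x, in_ideal a x <-> exists c, x = c * d).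

Definition hermite (R : comNzRingType) : Prop :=
  forall a b : R, exists d a' b' : R,
    [/\ a = d * a', b = d * b' & exists u v : R, u * a' + v * b' = 1].

Definition fg_submodules_cyclic (A : comNzRingType) (E : lmodType A) : Prop :=
  forall (n : nat) (e : 'I_n -> E), exists g : E,
    forall x : E, (exists c : 'I_n -> A, x = \sum_(i < n) c i *: e i)
                  <-> exists c : A, x = c *: g.

(* Ext^1_A(F, E) = 0, in Yoneda form: every short exact sequence
   0 -> E -> M -> F -> 0 of A-modules splits. *)
Definition Ext1_vanishes (A : comNzRingType) (F E : lmodType A) : Prop :=
  forall (M : lmodType A) (i : {linear E -> M}) (p : {linear M -> F}),
    injective i -> (forall y : F, exists x : M, p x = y) ->
    (forall x : M, p x = 0 <-> exists e : E, i e = x) ->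
    exists r : {linear M -> E}, forall e : E, r (i e) = e.

Definition FP_injective (A : comNzRingType) (E : lmodType A) : Prop :=
  forall F : lmodType A, finitely_presented F -> Ext1_vanishes F E.

Section TrivExt.
Variables (A : comNzRingType) (E : lmodType A).

Definition triv_ext : Type := (A * E)%type.
HB.instance Definition _ := GRing.Zmodule.on triv_ext.

Definition te_one : triv_ext := (1, 0).
Definition te_mul (x y : triv_ext) : triv_ext :=
  (x.1 * y.1, x.1 *: y.2 + y.1 *: x.2).

Lemma te_mulA : associative te_mul.
Proof.
move=> [a e] [b f] [c g]; rewrite /te_mul /=; congr (_, _); first by rewrite mulrA.
rewrite !scalerDr !scalerA !addrA; congr (_ + _ + _); first by rewrite mulrC.
by rewrite mulrC.
Qed.

Lemma te_mulC : commutative te_mul.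
Proof. by move=> [a e] [b f]; rewrite /te_mul /= mulrC addrC. Qed.

Lemma te_mul1 : left_id te_one te_mul.
Proof. by move=> [a e]; rewrite /te_mul /= mul1r scale1r scaler0 addr0. Qed.

Lemma te_mulDl : left_distributive te_mul +%R.
Proof.
move=> [a e] [b f] [c g]; rewrite /te_mul /=; congr (_, _); first by rewrite mulrDl.
rewrite scalerDl scalerDr; rewrite -!addrA; congr (_ + _).
by rewrite addrC -!addrA; congr (_ + _); rewrite addrC.
Qed.

Lemma te_one_neq0 : te_one != 0.
Proof. by apply/negP => /eqP [] /eqP; rewrite oner_eq0. Qed.

HB.instance Definition _ := GRing.Zmodule_isComNzRing.Build triv_ext
  te_mulA te_mulC te_mul1 te_mulDl te_one_neq0.
End TrivExt.

(* Hermite implies Bezout in any ring.  If R = A ⋉ E is Bezout, then so is A, finitely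
   generated submodules of E are cyclic, and E is divisible in the sense that e ∈ aE as
   soon as Ann(a) e = 0.  Over a coherent Bezout ring this divisibility lets one solve
   every consistent finite linear system over E, one unknown at a time, which is
   FP-injectivity; conversely FP-injectivity, tested on A/aA, gives the divisibility back.
   If A is moreover reduced, the annihilator of any c is (1 - e)A for an idempotent e,
   which makes A Hermite.  A unimodular change of generators then reduces the Hermite
   property of R to pairs (c, x), (0, y), and these are handled separately on eR, where
   c divides ey, and on (1 - e)R, where x and y are multiples of one generator with
   comaximal coefficients. *)

From HB Require Import structures.
From mathcomp Require Import all_boot all_algebra ring.
From mathcomp Require Import boolp.
Set Implicit Arguments. Unset Strict Implicit. Unset Printing Implicit Defensive.
Import GRing.Theory.
Local Open Scope ring_scope.

Lemma sumZ_delta (R : pzRingType) (V : lmodType R) n (v : 'I_n -> V) i :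
  \sum_(j < n) (i == j)%:R *: v j = v i.
Proof.
rewrite (bigD1 i) //= eqxx scale1r big1 ?addr0 // => j; rewrite eq_sym => /negPf ->.
by rewrite scale0r.
Qed.

Lemma sum_delta_mul (R : pzRingType) n (a : 'I_n -> R) i :
  \sum_(j < n) (i == j)%:R * a j = a i.
Proof. exact: (@sumZ_delta R R^o). Qed.

Lemma sum_mul_delta (R : comPzRingType) n (a : 'I_n -> R) i :
  \sum_(j < n) a j * (j == i)%:R = a i.
Proof.
by rewrite -(sum_delta_mul a); apply: eq_bigr => j _; rewrite mulrC eq_sym.
Qed.

Lemma exchange_sumZ (R : comPzRingType) (V : lmodType R) m p
    (c : 'I_p -> R) (r : 'I_p -> 'I_m -> R) (v : 'I_m -> V) :
  \sum_i (\sum_k c k * r k i) *: v i = \sum_k c k *: \sum_i r k i *: v i.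
Proof.
under eq_bigr => i _ do rewrite scaler_suml.
rewrite exchange_big /=; apply: eq_bigr => k _.
by rewrite scaler_sumr; apply: eq_bigr => i _; rewrite scalerA.
Qed.

Lemma regular_scaleE (R : pzSemiRingType) (x y : R) : x *: (y : R^o) = x * y.
Proof. by []. Qed.

Lemma relations_fg_same_ideal (A : comNzRingType) n m (a : 'I_n -> A) (b : 'I_m -> A) :
  (forall x, in_ideal a x <-> in_ideal b x) ->
  relations_fg (b : 'I_m -> A^o) -> relations_fg (a : 'I_n -> A^o).
Proof.
move=> a_b [m' [r [rb0 rbP]]].
have /choice [s bE] : forall k, exists s : 'I_n -> A, b k = \sum_i s i * a i.
  by move=> k; apply/a_b; exists (fun k' => (k == k')%:R); rewrite sum_delta_mul.
have /choice [t aE] : forall l, exists t : 'I_m -> A, a l = \sum_k t k * b k.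
  by move=> l; apply/a_b; exists (fun l' => (l == l')%:R); rewrite sum_delta_mul.
(* Generators: the relations of b pulled back along b = s a, and those saying a = t (s a). *)
pose rho (j : 'I_m') (i : 'I_n) := \sum_k r j k * s k i.
pose w (l i : 'I_n) := (l == i)%:R - \sum_k t l k * s k i.
exists (m' + n)%N, (fun j => match split j with inl j => rho j | inr l => w l end).
split=> [j|c ca0].
  under eq_bigr => i _ do rewrite regular_scaleE; case: (split j) => [j'|l].
    rewrite -[RHS](rb0 j'); under eq_bigr => i _ do rewrite mulr_suml.
    rewrite exchange_big; apply: eq_bigr => k _.
    by rewrite regular_scaleE bE mulr_sumr; apply: eq_bigr => i _; rewrite mulrA.
  under eq_bigr => i _ do rewrite mulrBl.
  rewrite sumrB; have -> := sum_delta_mul a l; rewrite aE; apply/eqP; rewrite subr_eq0; apply/eqP.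
  under [RHS]eq_bigr => i _ do rewrite mulr_suml.
  rewrite exchange_big; apply: eq_bigr => k _.
  by rewrite bE mulr_sumr; apply: eq_bigr => i _; rewrite mulrA.
pose x k := \sum_l c l * t l k.
have [|u xE] := rbP x.
  rewrite -[RHS]ca0; under eq_bigr => k _ do rewrite regular_scaleE mulr_suml.
  rewrite exchange_big; apply: eq_bigr => l _ /=.
  by rewrite regular_scaleE aE mulr_sumr; apply: eq_bigr => k _; rewrite mulrA.
exists (fun j => match split j with inl j => u j | inr l => c l end) => i.
rewrite big_split_ord; under eq_bigr => j _ do rewrite (unsplitK (inl j)).
under [X in _ = _ + X]eq_bigr => l _ do rewrite (unsplitK (inr l)) /= mulrBr.
rewrite sumrB; have -> := sum_mul_delta c i.
suff -> : \sum_j u j * rho j i = \sum_l c l * \sum_k t l k * s k i by rewrite addrC subrK.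
transitivity (\sum_k x k * s k i).
  under eq_bigr => j _ do rewrite mulr_sumr.
  rewrite exchange_big; apply: eq_bigr => k _.
  by rewrite xE mulr_suml; apply: eq_bigr => j _; rewrite mulrA.
under eq_bigr => k _ do rewrite mulr_suml.
rewrite exchange_big; apply: eq_bigr => l _.
by rewrite mulr_sumr; apply: eq_bigr => k _; rewrite mulrA.
Qed.

Lemma coherent_relations_fg (A : comNzRingType) : coherent A ->
  forall n (a : 'I_n -> A), relations_fg (a : 'I_n -> A^o).
Proof.
move=> cohA n a; have [m [b [a_b b_fg]]] := cohA n a.
exact: relations_fg_same_ideal a_b b_fg.
Qed.

Ltac linear_combination e :=
  apply/eqP; rewrite -subr_eq0; apply/eqP; transitivity e; first ring.

Definition fam2 (T : Type) (x y : T) : 'I_2 -> T := fun i => if i == ord0 then x else y.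

Lemma sum_ord2 (V : nmodType) (F : 'I_2 -> V) : \sum_(i < 2) F i = F ord0 + F ord_max.
Proof. by rewrite big_ord_recl big_ord1; congr (_ + F _); apply: val_inj. Qed.

Lemma in_ideal2 (A : comNzRingType) (a b x : A) :
  in_ideal (fam2 a b) x <-> exists u v, x = u * a + v * b.
Proof.
split=> [[c ->]|[u [v ->]]]; first by exists (c ord0), (c ord_max); rewrite sum_ord2.
by exists (fam2 u v); rewrite sum_ord2.
Qed.

Definition hermite_pair (R : comNzRingType) (x y : R) :=
  exists d x' y', [/\ x = d * x', y = d * y' & exists u v, u * x' + v * y' = 1].

Lemma bezout2 (A : comNzRingType) : bezout A -> forall a b : A,
  exists d u v a' b', [/\ d = u * a + v * b, a = a' * d & b = b' * d].
Proof.
move=> bezA a b; have [d dP] := bezA 2 (fam2 a b).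
have [|u [v dE]] := (in_ideal2 a b d).1; first by apply/dP; exists 1; rewrite mul1r.
have [|a' aE] := (dP a).1; first by apply/in_ideal2; exists 1, 0; rewrite mul1r mul0r addr0.
have [|b' bE] := (dP b).1; first by apply/in_ideal2; exists 0, 1; rewrite mul1r mul0r add0r.
by exists d, u, v, a', b'.
Qed.

Lemma hermite_bezout (R : comNzRingType) : hermite R -> bezout R.
Proof.
move=> hermR; elim=> [|n IHn] a.
  exists 0 => x; split=> [[c ->]|[c ->]]; first by exists 0; rewrite big_ord0 mul0r.
  by exists (fun=> 0); rewrite big_ord0 mulr0.
have [d0 d0P] := IHn (fun i => a (lift ord0 i)).
have [d [d0' [a0' [d0E a0E [u [v uv1]]]]]] := hermR d0 (a ord0).
exists d => x; split=> [[c ->]|[c ->]].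
  have [|c' c'E] := (d0P (\sum_(i < n) c (lift ord0 i) * a (lift ord0 i))).1.
    by exists (fun i => c (lift ord0 i)).
  by exists (c ord0 * a0' + c' * d0'); rewrite big_ord_recl c'E d0E a0E; ring.
have [|c0 d0c] := (d0P d0).2; first by exists 1; rewrite mul1r.
have dE : d = u * d0 + v * a ord0 by rewrite d0E a0E -[LHS]mulr1 -uv1; ring.
exists (fun i => if unlift ord0 i is Some j then c * u * c0 j else c * v).
rewrite big_ord_recl unlift_none; under eq_bigr => i _ do rewrite liftK.
rewrite dE d0c mulrDr !mulr_sumr addrC; congr (_ + _); first ring.
by apply: eq_bigr => i _; ring.
Qed.

Lemma hermite_stable_range (R : comNzRingType) : hermite R ->
  forall s t w a b : R, a * s + b * t + w = 1 ->
  exists x y U V : R, U * (s + x * w) + V * (t + y * w) = 1.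
Proof.
move=> hermR s t w a b abw1; have [d [s0 [t0 [sE tE [u [v uv1]]]]]] := hermR s t.
rewrite sE tE in abw1 *.
exists (- v), u, ((a * s0 + b * t0) * u - t0), ((a * s0 + b * t0) * v + s0).
linear_combination (((a * s0 + b * t0) * d + w) * (u * s0 + v * t0 - 1)
  + (a * (d * s0) + b * (d * t0) + w - 1)).
by rewrite uv1 abw1 !subrr mulr0 add0r.
Qed.

Lemma hermite_pair_unimodular (R : comNzRingType) (x y u v a b : R) :
  u * a + v * b = 1 -> hermite_pair (u * x + v * y) (- b * x + a * y) -> hermite_pair x y.
Proof.
move=> uv1 [d [p [q [pE qE [U [V UV1]]]]]].
exists d, (a * p - v * q), (b * p + u * q); split.
- linear_combination (a * (u * x + v * y - d * p) - v * (- b * x + a * y - d * q)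
    - x * (u * a + v * b - 1)).
  by rewrite -pE -qE uv1 !(subrr, mulr0, subr0).
- linear_combination (b * (u * x + v * y - d * p) + u * (- b * x + a * y - d * q)
    - y * (u * a + v * b - 1)).
  by rewrite -pE -qE uv1 !(subrr, mulr0, addr0, subr0).
exists (U * u - V * b), (U * v + V * a).
linear_combination ((U * p + V * q) * (u * a + v * b - 1) + (U * p + V * q - 1)).
by rewrite uv1 UV1 !(subrr, mulr0, addr0).
Qed.

(* On eR, c divides e f = c l; on (1 - e)R, c vanishes while x and f are multiples of g
   with comaximal coefficients s, t. *)
Lemma hermite_pair_split (R : comNzRingType) (e c x f l g s t U V : R) :
  e * e = e -> c * (1 - e) = 0 -> e * f = c * l -> x * l = 0 ->
  (1 - e) * x = s * g -> (1 - e) * f = t * g -> U * s + V * t = 1 ->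
  hermite_pair (c + x) f.
Proof.
move=> ee ce0 efE xl0 xE fE UV1.
exists (c + e * x + (1 - e) * g), (e + (1 - e) * s), ((1 - e) * t + e * l); split.
- linear_combination ((1 - e) ^+ 2 * ((1 - e) * x - s * g)
    - ((3 - e - s) * x - g) * (e * e - e) - (s - 1) * (c * (1 - e))).
  by rewrite ee ce0 xE !(subrr, mulr0, addr0, subr0).
- linear_combination ((e * f - c * l) + (1 - e) ^+ 2 * ((1 - e) * f - t * g) - e ^+ 2 * (x * l)
    - (- t * x + (2 - e) * f - g * l) * (e * e - e) - (t - l) * (c * (1 - e))).
  by rewrite ee ce0 efE fE xl0 !(subrr, mulr0, addr0, subr0).
exists (e + (1 - e) * U), ((1 - e) * V).
linear_combination ((2 - s - U - V * l) * (e * e - e) + (1 - e) ^+ 2 * (U * s + V * t - 1)).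
by rewrite ee UV1 !(subrr, mulr0, addr0).
Qed.

Section CoherentBezout.
Variable A : comNzRingType.
Hypotheses (coherentA : coherent A) (bezoutA : bezout A).

Lemma annihilator_principal (c : A) :
  exists k, k * c = 0 /\ forall z, z * c = 0 -> exists y, z = y * k.
Proof.
have [m [r [r0 rP]]] := coherent_relations_fg coherentA (fun _ : 'I_1 => c).
have rc0 j : r j ord0 * c = 0 by rewrite -(r0 j) big_ord1.
have [k kP] := bezoutA (fun j => r j ord0).
exists k; split=> [|z zc0].
  have [|u ->] := (kP k).2; first by exists 1; rewrite mul1r.
  by rewrite mulr_suml big1 // => j _; rewrite -mulrA rc0 mulr0.
apply/kP; have [|u uE] := rP (fun _ => z); first by rewrite big_ord1.
by exists u; rewrite (uE ord0).
Qed.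

Hypothesis reducedA : reduced A.

Lemma annihilator_idempotent (c : A) :
  exists e, [/\ e * e = e, c * (1 - e) = 0 & forall z, z * c = 0 -> e * z = 0].
Proof.
have [k [kc0 kP]] := annihilator_principal c.
have [d [u [v [c' [k' [dE cE kE]]]]]] := bezout2 bezoutA c k.
have d_reg x : x * d = 0 -> x = 0.
  move=> xd0; have [|y xE] := kP x; first by rewrite cE mulrCA xd0 mulr0.
  have xk0 : x * k = 0 by rewrite kE mulrCA xd0 mulr0.
  by apply: (@reducedA x 2); rewrite expr2 {2}xE mulrCA xk0 mulr0.
(* d = gcd(c, k) is regular since A is reduced, so c' and k' are comaximal with c' k' = 0. *)
have uv1 : u * c' + v * k' = 1.
  apply/eqP; rewrite -subr_eq0; apply/eqP/d_reg.
  by rewrite mulrBl mul1r mulrDl -!mulrA -cE -kE -dE subrr.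
have c'k'0 : c' * k' = 0.
  apply/d_reg/d_reg; have -> : c' * k' * d * d = c' * d * (k' * d) by ring.
  by rewrite -cE -kE mulrC.
exists (u * c'); split=> [|| z /kP [y ->]].
- by rewrite -[RHS]mulr1 -uv1; ring: c'k'0.
- by rewrite -uv1 cE; ring: c'k'0.
- by rewrite kE; ring: c'k'0.
Qed.

Lemma coherent_reduced_bezout_hermite : hermite A.
Proof.
move=> a b; have [d [u [v [a0 [b0 [dE aE bE]]]]]] := bezout2 bezoutA a b.
have [e [ee de0 eP]] := annihilator_idempotent d.
have e_unimod : e * (1 - u * a0 - v * b0) = 0.
  apply: eP; linear_combination (d - (u * a + v * b) + u * (a - a0 * d) + v * (b - b0 * d)).
  by rewrite -dE -aE -bE !subrr !mulr0 !addr0.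
exists d, (e * a0 + (1 - e)), (e * b0); split.
- by rewrite aE; linear_combination ((a0 - 1) * (d * (1 - e))); rewrite de0 mulr0.
- by rewrite bE; linear_combination (b0 * (d * (1 - e))); rewrite de0 mulr0.
exists (e * u + (1 - e)), (e * v).
linear_combination ((u * a0 + v * b0 - u - a0 + 1) * (e * e - e) - e * (1 - u * a0 - v * b0)).
by rewrite ee e_unimod subrr mulr0 subr0.
Qed.
End CoherentBezout.

Lemma hermite_cyclic_unimodular (A : comNzRingType) (E : lmodType A) :
  hermite A -> fg_submodules_cyclic E -> forall x y : E,
  exists g s t, [/\ x = s *: g, y = t *: g & exists U V, U * s + V * t = 1].
Proof.
move=> hermA cycE x y; have [g gP] := cycE 2 (fam2 x y).
have [|s xE] := (gP x).1; first by exists (fam2 1 0); rewrite sum_ord2 /= scale1r scale0r addr0.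
have [|t yE] := (gP y).1; first by exists (fam2 0 1); rewrite sum_ord2 /= scale1r scale0r add0r.
have [|c gE] := (gP g).2; first by exists 1; rewrite scale1r.
rewrite sum_ord2 /= in gE; pose w := 1 - c ord0 * s - c ord_max * t.
have wg0 : w *: g = 0.
  by rewrite /w !scalerBl scale1r -!scalerA -xE -yE {1}gE addrAC addrK subrr.
have csw : c ord0 * s + c ord_max * t + w = 1 by rewrite /w; ring.
have [x' [y' [U [V UV1]]]] := hermite_stable_range hermA csw.
exists g, (s + x' * w), (t + y' * w); split; last by exists U, V.
  by rewrite scalerDl -scalerA wg0 scaler0 addr0.
by rewrite scalerDl -scalerA wg0 scaler0 addr0.
Qed.

(** * Linear systems over a module and FP-injectivity *)

(* Elementary form of Ext^1(A/aA, E) = 0: maps aA -> E extend to A. *)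
Definition ann_divisible (A : comNzRingType) (E : lmodType A) :=
  forall (a : A) (e : E), (forall z, z * a = 0 -> z *: e = 0) -> exists e', e = a *: e'.

Section LinearSystems.
Variables (A : comNzRingType) (E : lmodType A).

Definition consistent_system m n (a : 'I_m -> 'I_n -> A) (e : 'I_m -> E) :=
  forall c : 'I_m -> A, (forall j, \sum_i c i * a i j = 0) -> \sum_i c i *: e i = 0.

Definition systems_solvable :=
  forall n m (a : 'I_m -> 'I_n -> A) (e : 'I_m -> E), consistent_system a e ->
  exists x : 'I_n -> E, forall i, \sum_j a i j *: x j = e i.

Lemma bezout_solve_one_unknown : bezout A -> ann_divisible E ->
  forall m (a : 'I_m -> A) (e : 'I_m -> E),
  (forall c, \sum_i c i * a i = 0 -> \sum_i c i *: e i = 0) ->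
  exists x, forall i, a i *: x = e i.
Proof.
move=> bezA divE m a e cons; have [d dP] := bezA m a.
have [|s dE] := (dP d).2; first by exists 1; rewrite mul1r.
have /choice [t aE] : forall i, exists t, a i = t * d.
  by move=> i; apply/dP; exists (fun l => (i == l)%:R); rewrite sum_delta_mul.
pose G := \sum_l s l *: e l.
have eE i : e i = t i *: G.
  have := cons (fun l => t i * s l - (i == l)%:R).
  under eq_bigr => l _ do rewrite mulrBl -mulrA.
  rewrite sumrB sum_delta_mul -mulr_sumr -dE -aE subrr => /(_ erefl).
  under eq_bigr => l _ do rewrite scalerBl -scalerA.
  by rewrite sumrB sumZ_delta -scaler_sumr => /eqP; rewrite subr_eq0 => /eqP.
have [x GE] : exists x, G = d *: x.
  apply: divE => z zd0; have := cons (fun l => z * s l).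
  under eq_bigr => l _ do rewrite -mulrA.
  rewrite -mulr_sumr -dE zd0 => /(_ erefl).
  by under eq_bigr => l _ do rewrite -scalerA; rewrite -scaler_sumr.
by exists x => i; rewrite eE GE aE scalerA.
Qed.

(* Eliminate the first unknown: by coherence the relations among its coefficients are
   finitely generated, and they turn the system into a consistent one in the others. *)
Lemma coherent_bezout_systems_solvable :
  coherent A -> bezout A -> ann_divisible E -> systems_solvable.
Proof.
move=> cohA bezA divE; elim=> [|n IHn] m a e cons.
  exists (fun=> 0) => i; rewrite big_ord0.
  by have := cons (fun l => (i == l)%:R); rewrite sumZ_delta => -> // [].
pose a0 i := a i ord0.
have [p [r [r0 rP]]] := coherent_relations_fg cohA a0.
pose b k j := \sum_i r k i * a i (lift ord0 j).
pose f k := \sum_i r k i *: e i.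
have [y yE] : exists y : 'I_n -> E, forall k, \sum_j b k j *: y j = f k.
  apply: IHn => c cb0.
  have := cons (fun i => \sum_k c k * r k i).
  rewrite (exchange_sumZ c r e) => -> // j'.
  have := exchange_sumZ c r (fun i => a i j' : A^o); rewrite /= => ->.
  case: (unliftP ord0 j') => [j ->|->]; first exact: cb0.
  by rewrite big1 // => k _; rewrite r0 scaler0.
pose g i := e i - \sum_j a i (lift ord0 j) *: y j.
have [x0 x0E] : exists x0, forall i, a0 i *: x0 = g i.
  apply: bezout_solve_one_unknown => // c ca0; have [u uE] := rP c ca0.
  under eq_bigr => i _ do rewrite uE.
  rewrite exchange_sumZ big1 // => k _.
  rewrite /g; under eq_bigr => i _ do rewrite scalerBr.
  rewrite sumrB -/(f k) -(exchange_sumZ (r k) (fun i j => a i (lift ord0 j)) y) -yE.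
  by rewrite subrr scaler0.
exists (fun j' => if unlift ord0 j' is Some j then y j else x0) => i.
rewrite big_ord_recl unlift_none; under eq_bigr => j _ do rewrite liftK.
by rewrite x0E /g subrK.
Qed.
End LinearSystems.

Section FinitePresentation.
Variables (A : comNzRingType) (F : lmodType A) (n m : nat).
Variables (g : 'I_n -> F) (r : 'I_m -> 'I_n -> A).
Hypothesis g_gen : generates g.
Hypothesis r_complete : forall c : 'I_n -> A, \sum_j c j *: g j = 0 ->
  exists u : 'I_m -> A, forall j, c j = \sum_k u k * r k j.

Lemma presentation_linear_ext (M : lmodType A) (x : 'I_n -> M) :
  (forall k, \sum_j r k j *: x j = 0) ->
  exists f : {linear F -> M}, forall c, f (\sum_j c j *: g j) = \sum_j c j *: x j.
Proof.
move=> rx0; have /choice [coef coefE] := g_gen.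
have wd c c' : \sum_j c j *: g j = \sum_j c' j *: g j ->
    \sum_j c j *: x j = \sum_j c' j *: x j.
  move=> cc'; apply/eqP; rewrite -subr_eq0 -sumrB; apply/eqP.
  have [|u uE] := @r_complete (fun j => c j - c' j).
    by under eq_bigr => j _ do rewrite scalerBl; rewrite sumrB cc' subrr.
  under eq_bigr => j _ do rewrite -scalerBl uE.
  by rewrite exchange_sumZ big1 // => k _; rewrite rx0 scaler0.
pose f v := \sum_j coef v j *: x j.
have fE c : f (\sum_j c j *: g j) = \sum_j c j *: x j by apply/wd/esym/coefE.
have f_lin : linear f.
  move=> a v w; rewrite [in LHS](coefE v) [in LHS](coefE w) scaler_sumr -big_split /=.
  under eq_bigr => j _ do rewrite scalerA -scalerDl.
  rewrite fE scaler_sumr -big_split; apply: eq_bigr => j _ /=.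
  by rewrite scalerDl scalerA.
pose fL : {linear F -> M} := HB.pack f (GRing.isLinear.Build _ _ _ _ f f_lin).
by exists fL.
Qed.
End FinitePresentation.

Section SplitExact.
Variables (A : comNzRingType) (E M F : lmodType A).
Variables (i : {linear E -> M}) (p : {linear M -> F}).
Hypotheses (i_inj : injective i) (ker_p : forall x, p x = 0 <-> exists e, i e = x).

Lemma retraction_of_section (s : {linear F -> M}) :
  (forall v, p (s v) = v) -> exists r : {linear M -> E}, forall e, r (i e) = e.
Proof.
move=> ps; have /choice [r rE] : forall x, exists e, i e = x - s (p x).
  by move=> x; apply/ker_p; rewrite linearB /= ps subrr.
have r_lin : linear r.
  move=> a x y; apply: i_inj; rewrite linearP /= !rE !linearP /=.
  by rewrite scalerN scalerBr addrACA.
pose rL : {linear M -> E} := HB.pack r (GRing.isLinear.Build _ _ _ _ r r_lin).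
exists rL => e; apply: i_inj; rewrite /= rE.
by have [_ ->] := ker_p (i e); [rewrite linear0 subr0 | exists e].
Qed.
End SplitExact.

Lemma systems_solvable_FP_injective (A : comNzRingType) (E : lmodType A) :
  systems_solvable E -> FP_injective E.
Proof.
move=> solvE F [n [g [g_gen [m [r [r0 r_complete]]]]]] M i p i_inj p_surj ker_p.
have /choice [x xE] : forall j, exists x, p x = g j by move=> j; apply: p_surj.
have pi0 e : p (i e) = 0 by apply/ker_p; exists e.
have /choice [es esE] : forall k, exists e, i e = \sum_j r k j *: x j.
  move=> k; apply/ker_p; rewrite linear_sum.
  by under eq_bigr => j _ do rewrite linearZ /= xE; apply: r0.
have [|y yE] := solvE n m r es.
  move=> c cr0; apply: i_inj; rewrite linear0 linear_sum.
  under eq_bigr => k _ do rewrite linearZ /= esE.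
  by rewrite -exchange_sumZ big1 // => j _; rewrite cr0 scale0r.
have [|s sE] := presentation_linear_ext g_gen r_complete (x := fun j => x j - i (y j)).
  move=> k; under eq_bigr => j _ do rewrite scalerBr.
  rewrite sumrB -esE -yE linear_sum.
  by under eq_bigr => j _ do rewrite linearZ; rewrite subrr.
apply: (retraction_of_section i_inj ker_p (s := s)) => v.
have [c ->] := g_gen v; rewrite sE linear_sum; apply: eq_bigr => j _.
by rewrite linearZ linearB /= xE pi0 subr0.
Qed.

(** * Cokernels *)

Section Cokernel.
Variables (R : pzRingType) (U V : lmodType R) (f : {linear U -> V}).
Local Open Scope quotient_scope.

(* Membership is decided classically, as [Quotient.quot] quotients by a boolean predicate. *)
Definition in_range : {pred V} := fun v => `[< exists u, f u = v >].

Lemma in_rangeP v : reflect (exists u, f u = v) (v \in in_range).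
Proof. exact: asboolP. Qed.

Lemma in_range_zmod_closed : zmod_closed in_range.
Proof.
split; first by apply/in_rangeP; exists 0; rewrite linear0.
move=> _ _ /in_rangeP[u <-] /in_rangeP[w <-].
by apply/in_rangeP; exists (u - w); rewrite linearB.
Qed.

HB.instance Definition _ := GRing.isZmodClosed.Build V in_range in_range_zmod_closed.

Local Notation coker := (Quotient.quot in_range).

Definition coker_scale (a : R) := lift_op1 coker ( *:%R a).

Lemma pi_coker_scale a : {morph \pi_coker : v / a *: v >-> coker_scale a v}.
Proof.
move=> v; unlock coker_scale; apply/eqP; rewrite piE Quotient.equivE -scalerBr.
have /in_rangeP[u uE] : v - repr (\pi_coker v) \in in_range.
  by rewrite Quotient.idealrBE reprK.
by apply/in_rangeP; exists (a *: u); rewrite linearZ uE.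
Qed.
Canonical pi_coker_scale_morph a := PiMorph1 (pi_coker_scale a).

Lemma coker_scaleA a b (q : coker) : coker_scale a (coker_scale b q) = coker_scale (a * b) q.
Proof. by rewrite -[q]reprK !piE scalerA. Qed.
Lemma coker_scale1 : left_id 1 coker_scale.
Proof. by move=> q; rewrite -[q]reprK !piE scale1r. Qed.
Lemma coker_scaleDr : right_distributive coker_scale +%R.
Proof. by move=> a p q; rewrite -[p]reprK -[q]reprK !piE scalerDr. Qed.
Lemma coker_scaleDl (q : coker) : {morph coker_scale^~ q : a b / a + b}.
Proof. by move=> a b; rewrite -[q]reprK !piE scalerDl. Qed.

HB.instance Definition _ := GRing.Zmodule_isLmodule.Build R coker
  coker_scaleA coker_scale1 coker_scaleDr coker_scaleDl.

Definition coker_pi : V -> coker := \pi_coker.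

Lemma coker_pi_linear : linear coker_pi.
Proof. by move=> a v w; rewrite /coker_pi !piE. Qed.
HB.instance Definition _ := GRing.isLinear.Build R V coker _ coker_pi coker_pi_linear.

Lemma coker_pi_eq0 v : coker_pi v = 0 <-> exists u, f u = v.
Proof.
have -> : (exists u, f u = v) <-> v \in in_range by split=> /in_rangeP.
by rewrite /coker_pi -[X in X \in _]subr0 Quotient.idealrBE raddf0; split=> [->|/eqP].
Qed.

Lemma coker_pi_eq v w : coker_pi v = coker_pi w <-> exists u, f u = v - w.
Proof.
rewrite -coker_pi_eq0 linearB /=.
by split=> [->|/eqP]; [rewrite subrr | rewrite subr_eq0 => /eqP].
Qed.

Lemma coker_pi_surj (q : coker) : exists v, coker_pi v = q.
Proof. by exists (repr q); rewrite /coker_pi reprK. Qed.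

Lemma coker_lift (W : lmodType R) (h : {linear V -> W}) :
  (forall u, h (f u) = 0) ->
  exists g : {linear coker -> W}, forall v, g (coker_pi v) = h v.
Proof.
move=> hf0; pose g (q : coker) := h (repr q).
have gE v : g (coker_pi v) = h v.
  have /coker_pi_eq[u uE] : coker_pi (repr (coker_pi v)) = coker_pi v.
    by rewrite {1}/coker_pi reprK.
  by apply/eqP; rewrite -subr_eq0 -linearB -uE hf0.
have g_lin : linear g.
  move=> a p q; have [v <-] := coker_pi_surj p; have [w <-] := coker_pi_surj q.
  by rewrite -linearP !gE linearP.
pose gL : {linear coker -> W} := HB.pack g (GRing.isLinear.Build _ _ _ _ g g_lin).
by exists gL.
Qed.
End Cokernel.

Notation coker f := (Quotient.quot (in_range f)).

Definition scalev (R : pzRingType) (V : lmodType R) (v : V) (k : R^o) : V := (k : R) *: v.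

Lemma scalev_linear (R : pzRingType) (V : lmodType R) (v : V) : linear (scalev v).
Proof. by move=> a k l; rewrite /scalev scalerDl scalerA. Qed.
HB.instance Definition _ (R : pzRingType) (V : lmodType R) (v : V) :=
  GRing.isLinear.Build R R^o V _ (scalev v) (scalev_linear v).

Lemma coker_scalev_fp (A : comNzRingType) (c : A) :
  finitely_presented (coker (scalev (c : A^o))).
Proof.
exists 1, (fun=> coker_pi _ (1 : A^o)); split.
  move=> q; have [k <-] := coker_pi_surj q; exists (fun=> k).
  by rewrite big_ord1 -linearZ /= [k *: _]mulr1.
exists 1, (fun _ _ => c); split=> [_|k].
  by rewrite big_ord1 -linearZ; apply/coker_pi_eq0; exists 1; apply: mulrC.
rewrite big_ord1 -linearZ => /coker_pi_eq0[y yE].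
exists (fun=> y) => j; rewrite big_ord1 (ord1 j); symmetry.
by rewrite -[RHS]mulr1; exact: yE.
Qed.

(* Apply FP-injectivity to 0 -> E -> (A ⊕ E)/A(c, -e) -> A/cA -> 0. *)
Lemma FP_injective_ann_divisible (A : comNzRingType) (E : lmodType A) :
  FP_injective E -> ann_divisible E.
Proof.
move=> fpE c e ann.
pose F := coker (scalev (c : A^o)).
pose M := coker (scalev ((c, - e) : A^o * E)).
pose i0 (x : E) : M := coker_pi _ ((0, x) : A^o * E).
have i0_lin : linear i0.
  move=> a x y; rewrite /i0 -linearP; congr (coker_pi _ _).
  by apply: injective_projections => /=; rewrite ?scaler0 ?addr0.
pose i : {linear E -> M} := HB.pack i0 (GRing.isLinear.Build _ _ _ _ i0 i0_lin).
have h0 k : (coker_pi (scalev (c : A^o)) \o fst) (scalev ((c, - e) : A^o * E) k) = 0.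
  by apply/coker_pi_eq0; exists k.
have [p pE] := coker_lift h0.
have i_inj : injective i.
  move=> x y /coker_pi_eq[z [/= zc0 zE]].
  have /ann ze0 : z * c = 0 by rewrite -[RHS](subrr 0); exact: zc0.
  by apply/eqP; rewrite -subr_eq0 -zE scalerN ze0 oppr0.
have p_surj q : exists m, p m = q.
  by have [k <-] := coker_pi_surj q; exists (coker_pi _ ((k, 0) : A^o * E)); rewrite pE.
have ker_p m : p m = 0 <-> exists x, i x = m.
  split=> [|[x <-]]; last by rewrite pE /= linear0.
  have [[k x] <-] := coker_pi_surj m; rewrite pE => /coker_pi_eq0[y /= yE].
  exists (x + y *: e); apply/coker_pi_eq; exists (- y).
  apply: injective_projections => /=; first by rewrite -yE /scalev /= scaleNr sub0r.
  by rewrite /scalev /= scaleNr scalerN opprK addrAC subrr add0r.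
have [r rE] := fpE F (coker_scalev_fp c) M i p i_inj p_surj ker_p.
exists (r (coker_pi _ ((1, 0) : A^o * E))); rewrite -linearZ /=.
have -> : c *: coker_pi _ ((1, 0) : A^o * E) = i e.
  rewrite -linearZ; apply/coker_pi_eq; exists 1.
  apply: injective_projections => /=.
    by rewrite /scalev /= subr0 scale1r; exact: (esym (mulr1 c)).
  by rewrite /scalev /= scaler0 sub0r scale1r.
by rewrite rE.
Qed.

(** * The trivial ring extension *)

Section TrivialExtension.
Variables (A : comNzRingType) (E : lmodType A).
Local Notation R := (triv_ext E).

Lemma te_mulE (x y : R) : x * y = (x.1 * y.1, x.1 *: y.2 + y.1 *: x.2) :> R.
Proof. by []. Qed.

Lemma te_sumE I (r : seq I) (P : pred I) (F : I -> R) :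
  \sum_(i <- r | P i) F i = (\sum_(i <- r | P i) (F i).1, \sum_(i <- r | P i) (F i).2) :> R.
Proof. by elim/big_rec3: _ => // i x y1 y2 _ ->. Qed.

Definition te_base (a : A) : R := (a, 0).
Definition te_mod (x : E) : R := (0, x).

Lemma te_base_zmod_morphism : zmod_morphism te_base.
Proof. by move=> a b; rewrite /te_base; congr pair; rewrite subr0. Qed.
Lemma te_base_monoid_morphism : monoid_morphism te_base.
Proof. by split=> // a b; rewrite /te_base te_mulE /= !scaler0 addr0. Qed.
HB.instance Definition _ := GRing.isZmodMorphism.Build A R te_base te_base_zmod_morphism.
HB.instance Definition _ := GRing.isMonoidMorphism.Build A R te_base te_base_monoid_morphism.

Lemma te_pairE (a : A) (x : E) : ((a, x) : R) = te_base a + te_mod x.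
Proof. by rewrite /te_base /te_mod; congr pair; rewrite (addr0, add0r). Qed.
Lemma te_mod_zmod_morphism : zmod_morphism te_mod.
Proof. by move=> x y; rewrite /te_mod; congr pair; rewrite subr0. Qed.
HB.instance Definition _ := GRing.isZmodMorphism.Build E R te_mod te_mod_zmod_morphism.
Lemma te_modZ a x : te_mod (a *: x) = te_base a * te_mod x.
Proof. by rewrite te_mulE /= mulr0 scale0r addr0. Qed.
Lemma te_modM x y : te_mod x * te_mod y = 0.
Proof. by rewrite te_mulE /= mulr0 !scale0r addr0. Qed.

Section BezoutExtension.
Hypothesis bezoutR : bezout R.

Lemma triv_ext_bezout_base : bezout A.
Proof.
move=> n a; have [d dP] := bezoutR (fun i => te_base (a i)).
exists d.1 => x; split=> [[c ->]|[c ->]].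
  have [|p pE] := (dP (te_base (\sum_i c i * a i))).1.
    by exists (fun i => te_base (c i)); rewrite rmorph_sum; under eq_bigr do rewrite rmorphM.
  by exists p.1; have /= := congr1 fst pE.
have [|cc ->] := (dP d).2; first by exists 1; rewrite mul1r.
exists (fun i => c * (cc i).1); rewrite te_sumE /= mulr_sumr.
by apply: eq_bigr => i _; rewrite mulrA.
Qed.

Lemma triv_ext_cyclic : fg_submodules_cyclic E.
Proof.
move=> n x; have [d dP] := bezoutR (fun i => te_mod (x i)).
have [|cc dE] := (dP d).2; first by exists 1; rewrite mul1r.
have d1 : d.1 = 0 by rewrite dE te_sumE big1 // => i _; apply: mulr0.
exists d.2 => y; split=> [[c ->]|[c ->]].
  have [|p pE] := (dP (te_mod (\sum_i c i *: x i))).1.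
    by exists (fun i => te_base (c i)); rewrite raddf_sum; apply: eq_bigr => i _; apply: te_modZ.
  by exists p.1; have /= := congr1 snd pE; rewrite d1 scale0r addr0.
have -> : d.2 = \sum_i (cc i).1 *: x i.
  by rewrite dE te_sumE /=; apply: eq_bigr => i _; rewrite scale0r addr0.
by exists (fun i => c * (cc i).1); rewrite scaler_sumr; under eq_bigr do rewrite scalerA.
Qed.

Lemma triv_ext_ann_divisible : ann_divisible E.
Proof.
move=> a e ann; have [d dP] := bezoutR (fam2 (te_base a) (te_mod e)).
have [|u [v dE]] := (in_ideal2 (te_base a) (te_mod e) d).1.
  by apply/dP; exists 1; rewrite mul1r.
have [|p /(congr1 fst) /= ad] := (dP (te_base a)).1.
  by apply/in_ideal2; exists 1, 0; rewrite mul1r mul0r addr0.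
have [|q [/= qd0 eE]] := (dP (te_mod e)).1.
  by apply/in_ideal2; exists 0, 1; rewrite mul1r mul0r add0r.
have d1 : d.1 = u.1 * a by rewrite dE /= mulr0 addr0.
have d2 : d.2 = a *: u.2 + v.1 *: e by rewrite dE /= scaler0 add0r scale0r addr0.
have qa0 : q.1 * a = 0 by rewrite ad mulrCA -qd0 mulr0.
have qd2 : q.1 *: d.2 = 0.
  by rewrite d2 scalerDr !scalerA qa0 scale0r mulrC -scalerA ann // scaler0 addr0.
by exists (u.1 *: q.2); rewrite eE qd2 add0r d1 !scalerA mulrC.
Qed.
End BezoutExtension.

Section HermiteExtension.
Hypotheses (coherentA : coherent A) (reducedA : reduced A) (bezoutA : bezout A).
Hypotheses (divE : ann_divisible E) (cycE : fg_submodules_cyclic E).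

Lemma triv_ext_hermite_pair_base (c : A) (x y : E) :
  hermite_pair (te_base c + te_mod x) (te_mod y).
Proof.
have hermA := coherent_reduced_bezout_hermite coherentA bezoutA reducedA.
have [e [ee ce0 eP]] := annihilator_idempotent coherentA bezoutA reducedA c.
have [l yE] : exists l, e *: y = c *: l.
  by apply: divE => z /eP ez0; rewrite scalerA mulrC ez0 scale0r.
have [g [s [t [xE yE' [U [V UV1]]]]]] :=
  hermite_cyclic_unimodular hermA cycE ((1 - e) *: x) ((1 - e) *: y).
have te_base1B : 1 - te_base e = te_base (1 - e) by rewrite rmorphB rmorph1.
apply: (hermite_pair_split (e := te_base e) (l := te_mod l) (g := te_mod g)
  (s := te_base s) (t := te_base t) (U := te_base U) (V := te_base V)).
- by rewrite -rmorphM ee.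
- by rewrite te_base1B -rmorphM ce0 rmorph0.
- by rewrite -!te_modZ yE.
- exact: te_modM.
- by rewrite te_base1B -!te_modZ xE.
- by rewrite te_base1B -!te_modZ yE'.
- by rewrite -!rmorphM -rmorphD UV1 rmorph1.
Qed.

Lemma triv_ext_hermite : hermite R.
Proof.
move=> [a x] [b y]; rewrite !te_pairE.
have [d [a0 [b0 [aE bE [u [v uv1]]]]]] :=
  coherent_reduced_bezout_hermite coherentA bezoutA reducedA a b.
apply: (hermite_pair_unimodular (u := te_base u) (v := te_base v)
  (a := te_base a0) (b := te_base b0)); first by rewrite -!rmorphM -rmorphD uv1 rmorph1.
have -> : te_base u * (te_base a + te_mod x) + te_base v * (te_base b + te_mod y)
    = te_base d + te_mod (u *: x + v *: y).
  rewrite !mulrDr -!rmorphM -!te_modZ raddfD addrACA -rmorphD; congr (te_base _ + _).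
  by rewrite aE bE -[RHS]mulr1 -uv1; ring.
have -> : - te_base b0 * (te_base a + te_mod x) + te_base a0 * (te_base b + te_mod y)
    = te_mod (- b0 *: x + a0 *: y).
  rewrite -rmorphN !mulrDr -!rmorphM -!te_modZ raddfD addrACA -rmorphD.
  have -> : - b0 * a + a0 * b = 0 by rewrite aE bE; ring.
  by rewrite rmorph0 add0r.
exact: triv_ext_hermite_pair_base.
Qed.
End HermiteExtension.

End TrivialExtension.

Theorem corollary3p3 (A : comNzRingType) (E : lmodType A) :
  coherent A -> reduced A -> (exists e : E, e != 0) ->
  [<-> hermite (triv_ext E);
       bezout (triv_ext E);
       [/\ bezout A, FP_injective E & fg_submodules_cyclic E]].
Proof.
move=> cohA redA _; tfae.
- exact: hermite_bezout.
- move=> bezR; have bezA := triv_ext_bezout_base bezR; split=> //.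
    apply/systems_solvable_FP_injective/coherent_bezout_systems_solvable => //.
    exact: triv_ext_ann_divisible.
  exact: triv_ext_cyclic.
- case=> bezA /FP_injective_ann_divisible divE cycE.
  exact: triv_ext_hermite.
Qed.
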